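(* Let $\Omega$ be any set of $q$ elements, where $q$ is a power of two and $q \ge 8$. Then there exists a nice pair of permutations for $\Omega$.
   Context: For a permutation $\sigma$ of a $q$-element set $\Omega$ and $0 \le i < q$, $\sigma(i)$ denotes the element in position $i$. Given two permutations $\sigma_1,\sigma_2$ of $\Omega$, form the $2\times q$ array whose first row is $\sigma_1(0),\ldots,\sigma_1(q-1)$ and whose second row is $\sigma_2(0),\ldots,\sigma_2(q-1)$. Each $a\in\Omega$ occurs once in each row. If $a=\sigma_1(i)$, its first-row neighbors are $l_1=\sigma_1(i-1 \bmod q)$, $r_1=\sigma_1(i+1 \bmod q)$ and the down-neighbor $d=\sigma_2(i)$. If $a=\sigma_2(j)$, its second-row neighbors are $l_2=\sigma_2(j-1\bmod q)$, $r_2=\sigma_2(j+1 \bmod q)$ and the up-neighbor $u=\sigma_1(j)$. The pair $(\sigma_1,\sigma_2)$ is called a nice pair if for every $a\in\Omega$ the six elements $l_1,r_1,d,l_2,r_2,u$ are pairwise distinct. *)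

From mathcomp Require Import all_boot.
Set Implicit Arguments. Unset Strict Implicit. Unset Printing Implicit Defensive.

(* A permutation sigma of a q-element set Omega (a finType with #|Omega| = q)
   is a bijection sigma : 'I_q -> Omega; sigma i is the element in position i.
   Positions are taken mod q: ord_pred i = i-1 mod q, ordS i = i+1 mod q. *)
Definition is_perm_arr (Omega : finType) (q : nat) (s : 'I_q -> Omega) : Prop :=
  bijective s.

Definition nice_pair (Omega : finType) (q : nat) (s1 s2 : 'I_q -> Omega) : Prop :=
  forall (a : Omega) (i j : 'I_q), s1 i = a -> s2 j = a ->
    uniq [:: s1 (ord_pred i); s1 (ordS i); s2 i;
             s2 (ord_pred j); s2 (ordS j); s1 j].

From mathcomp Require Import all_boot.
From mathcomp Require Import zify.

Set Implicit Arguments.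
Unset Strict Implicit.
Unset Printing Implicit Defensive.

(* Enumerate Omega along any bijection e : 'I_q -> Omega and take
   s1 = e and s2 = e \o step, where step is the affine position map
   i |-> 5 i + 2 (mod q); it is a permutation of 'I_q because 5 is coprime to q.
   If a = s1 i = s2 j then i = step j, so the six neighbours of a are the
   images under e of the positions
     i - 1, i + 1, step i, step (j - 1), step (j + 1), j     (with i = step j).
   As 8 divides q, reducing positions mod 8 commutes with ordS, ord_pred and
   step, and with r = j mod 8 these six positions are congruent to
     5r + 1, 5r + 3, r + 4, 5r + 5, 5r + 7, r   (mod 8),
   which a finite check shows to be pairwise distinct for every r < 8.  Hence
   the six positions are distinct and so are their images under e. *)

Lemma nice_pair_comp (Omega : finType) (q : nat) (e : 'I_q -> Omega)
    (g : 'I_q -> 'I_q) :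
  injective e ->
  (forall j, uniq [:: ord_pred (g j); ordS (g j); g (g j);
                      g (ord_pred j); g (ordS j); j]) ->
  nice_pair e (e \o g).
Proof.
move=> e_inj window_uniq a i j <- /e_inj <-.
by have := window_uniq j; rewrite -(map_inj_uniq e_inj).
Qed.

Lemma enum_positions (Omega : finType) (q : nat) :
  #|Omega| = q -> exists e : 'I_q -> Omega, bijective e.
Proof.
move=> card_q; exists (fun i => enum_val (cast_ord (esym card_q) i)).
apply: inj_card_bij; last by rewrite card_ord card_q.
by move=> x y /enum_val_inj /cast_ord_inj.
Qed.

Lemma eqn_mod_mul2l d a m n :
  coprime d a -> (a * m == a * n %[mod d]) = (m == n %[mod d]).
Proof.
move=> cop_da; wlog le_nm : m n / n <= m.
  move=> hwlog; case: (leqP n m) => [|/ltnW le_mn]; first exact: hwlog.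
  by rewrite eq_sym [X in _ = X]eq_sym hwlog.
rewrite !eqn_mod_dvd ?leq_mul2l ?le_nm ?orbT // -mulnBr.
by rewrite Gauss_dvdr // coprime_sym.
Qed.

Section AffinePositions.
Variables (q a b : nat).
Hypotheses (q_gt0 : 0 < q) (cop_qa : coprime q a).

Definition affine_pos (i : 'I_q) : 'I_q := Ordinal (ltn_pmod (a * i + b) q_gt0).

(* Since a is a unit mod q, the affine position map is a permutation. *)
Lemma affine_pos_inj : injective affine_pos.
Proof.
move=> i j /(congr1 val) /= /eqP.
rewrite eqn_modDr eqn_mod_mul2l // !modn_small // => /eqP.
exact: ord_inj.
Qed.

Lemma affine_pos_bij : bijective affine_pos.
Proof. by apply: inj_card_bij; [exact: affine_pos_inj | rewrite card_ord]. Qed.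

End AffinePositions.

(* The six residues mod 8 of the window of position j, as functions of j mod 8,
   are pairwise distinct. *)
Lemma window_residues_uniq (r : nat) : r < 8 ->
  uniq [:: (5 * r + 1) %% 8; (5 * r + 3) %% 8; (r + 4) %% 8;
           (5 * r + 5) %% 8; (5 * r + 7) %% 8; r].
Proof. by do 8! case: r => [|r] //. Qed.

Section ModEight.
Variable q : nat.
Hypotheses (q_gt0 : 0 < q) (eight_dvd_q : 8 %| q).

Lemma modq_mod8 x : x %% q %% 8 = x %% 8.
Proof. exact: modn_dvdm. Qed.

Lemma ordS_mod8 (i : 'I_q) : ordS i %% 8 = (i + 1) %% 8.
Proof. by rewrite /= modq_mod8 addn1. Qed.

Lemma ord_pred_mod8 (i : 'I_q) : ord_pred i %% 8 = (i + 7) %% 8.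
Proof.
by rewrite /= modq_mod8; case/dvdnP: eight_dvd_q => t q_8t; lia.
Qed.

Notation step := (affine_pos 5 2 q_gt0).

Lemma step_mod8 (i : 'I_q) : step i %% 8 = (5 * i + 2) %% 8.
Proof. exact: modq_mod8. Qed.

(* The window of every position j consists of distinct positions, because
   already their residues mod 8 are distinct. *)
Lemma step_window_uniq (j : 'I_q) :
  uniq [:: ord_pred (step j); ordS (step j); step (step j);
           step (ord_pred j); step (ordS j); j].
Proof.
apply: (map_uniq (f := fun x : 'I_q => x %% 8)).
have step_step := step_mod8 (step j); have step_j := step_mod8 j.
have r1 : ord_pred (step j) %% 8 = (5 * (j %% 8) + 1) %% 8.
  by have := ord_pred_mod8 (step j); lia.
have r2 : ordS (step j) %% 8 = (5 * (j %% 8) + 3) %% 8.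
  by have := ordS_mod8 (step j); lia.
have r3 : step (step j) %% 8 = (j %% 8 + 4) %% 8 by lia.
have r4 : step (ord_pred j) %% 8 = (5 * (j %% 8) + 5) %% 8.
  by have := step_mod8 (ord_pred j); have := ord_pred_mod8 j; lia.
have r5 : step (ordS j) %% 8 = (5 * (j %% 8) + 7) %% 8.
  by have := step_mod8 (ordS j); have := ordS_mod8 j; lia.
rewrite [map _ _]/= r1 r2 r3 r4 r5.
by apply: window_residues_uniq; rewrite ltn_pmod.
Qed.

End ModEight.

Lemma pow2_ge8_facts q k : q = 2 ^ k -> 8 <= q -> 8 %| q /\ coprime q 5.
Proof.
move=> -> ge8; split; last by rewrite coprimeXl.
have k_ge3 : 3 <= k by case: k ge8 => [|[|[|k]]].
by rewrite (_ : 8 = 2 ^ 3) // dvdn_exp2l.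
Qed.

Theorem lemma2 (Omega : finType) (q : nat) (k : nat) :
  #|Omega| = q -> q = 2 ^ k -> 8 <= q ->
  exists (s1 s2 : 'I_q -> Omega),
    is_perm_arr s1 /\ is_perm_arr s2 /\ nice_pair s1 s2.
Proof.
move=> card_q q_pow ge8.
have [eight_dvd_q cop_q5] := pow2_ge8_facts q_pow ge8.
have q_gt0 : 0 < q by lia.
have [e e_bij] := enum_positions card_q.
exists e, (e \o affine_pos 5 2 q_gt0); split; first exact: e_bij.
split; first exact: bij_comp e_bij (@affine_pos_bij q 5 2 q_gt0 cop_q5).
apply: nice_pair_comp; first exact: bij_inj.
exact: step_window_uniq.
Qed.
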